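(* Let $(G,k)$ be an instance and let $v\in V$ satisfy $|N(v)|>7k$ and $\rho(v)> \frac{|N(v)|(|N(v)|-1)}{4}$. Then for every feasible solution $X$ with $v\notin X$, the connected component of $G-X$ containing $v$ is a clique.
   Context: Graphs are undirected, without self-loops, possibly with multi-edges. $N(v)$ is the set of vertices adjacent to $v$; $\rho(v)$ is the number of unordered pairs $\{u_1,u_2\}\subseteq N(v)$ joined by at least one edge (parallel edges counted once). A vertex set induces a clique if between any two distinct vertices of it there is exactly one edge, and a tree if it is connected and has no cycle (two parallel edges form a cycle). For an integer $k\ge1$, a feasible solution is a set $X\subseteq V$ with $|X|\le k$ such that every connected component of $G-X$ is a clique or a tree. *)

From mathcomp Require Import all_boot.
Set Implicit Arguments. Unset Strict Implicit. Unset Printing Implicit Defensive.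

(* An undirected multigraph without self-loops on a finite vertex type T:
   mult x y = number of edges between x and y. *)
Record mgraph (T : finType) := MGraph {
  mult : T -> T -> nat;
  mult_sym : forall x y, mult x y = mult y x;
  mult_irr : forall x, mult x x = 0
}.

Section Defs.
Variables (T : finType) (G : mgraph T).

Definition adj : rel T := fun x y => 0 < mult G x y.

Definition nbh (v : T) : {set T} := [set u | adj v u].

(* rho(v): number of unordered pairs {u1,u2} of (distinct) neighbours of v
   joined by at least one edge (parallel edges counted once). *)
Definition rho (v : T) : nat :=
  #|[set S : {set T} | [exists u1, exists u2,
       [&& S == [set u1; u2], u1 != u2, u1 \in nbh v, u2 \in nbh v & adj u1 u2]]]|.

Definition induces_clique (S : {set T}) : Prop :=
  forall u w, u \in S -> w \in S -> u != w -> mult G u w = 1.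

Definition adj_in (S : {set T}) : rel T :=
  fun x y => [&& x \in S, y \in S & adj x y].

(* A cycle in the induced subgraph G[S]: either two parallel edges (a cycle
   of length 2), or a closed path through >= 3 distinct vertices of S
   (self-loops do not exist). *)
Definition has_cycle_in (S : {set T}) : Prop :=
  (exists u w, [/\ u \in S, w \in S, u != w & 1 < mult G u w]) \/
  (exists s : seq T, [/\ 3 <= size s, uniq s, all (mem S) s & cycle (adj_in S) s]).

Definition induces_tree (S : {set T}) : Prop :=
  (forall u w, u \in S -> w \in S -> connect (adj_in S) u w) /\ ~ has_cycle_in S.

Definition comp_minus (X : {set T}) (v : T) : {set T} :=
  [set u | connect (adj_in (~: X)) v u].

Definition feasible (k : nat) (X : {set T}) : Prop :=
  #|X| <= k /\
  forall u, u \notin X -> induces_clique (comp_minus X u) \/ induces_tree (comp_minus X u).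

End Defs.

From mathcomp Require Import all_boot.
From mathcomp Require Import zify.
Set Implicit Arguments. Unset Strict Implicit. Unset Printing Implicit Defensive.

(* If the component of v in G - X were a tree, then two adjacent neighbours of
   v outside X would close a triangle with v inside that component.  Hence
   every adjacent pair of neighbours counted by rho(v) meets X, and so
   rho(v) <= |X| |N(v)| <= k |N(v)|; with |N(v)| > 7k this contradicts
   4 rho(v) > |N(v)| (|N(v)| - 1). *)

Section TreeComponent.
Variables (T : finType) (G : mgraph T).

Lemma adj_sym : symmetric (adj G).
Proof. by move=> x y; rewrite /adj mult_sym. Qed.

Lemma adj_neq x y : adj G x y -> x != y.
Proof. by apply: contraL => /eqP ->; rewrite /adj mult_irr. Qed.

Definition rho_pairs (v : T) : {set {set T}} :=
  [set S : {set T} | [exists u1, exists u2,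
     [&& S == [set u1; u2], u1 != u2, u1 \in nbh G v, u2 \in nbh G v & adj G u1 u2]]].

Lemma rhoE v : rho G v = #|rho_pairs v|.
Proof. by []. Qed.

Lemma mem_comp_minus_self (X : {set T}) v : v \in comp_minus G X v.
Proof. by rewrite inE connect0. Qed.

Lemma mem_comp_minus_nbh (X : {set T}) v u :
  v \notin X -> u \notin X -> u \in nbh G v -> u \in comp_minus G X v.
Proof.
move=> vX uX; rewrite !inE => avu; apply: connect1.
by rewrite /adj_in !inE vX uX avu.
Qed.

Lemma triangle_has_cycle_in (S : {set T}) x y z :
  x \in S -> y \in S -> z \in S -> adj G x y -> adj G y z -> adj G x z ->
  has_cycle_in G S.
Proof.
move=> xS yS zS axy ayz axz; right; exists [:: x; y; z]; split => //.
- by rewrite /= !inE negb_or !adj_neq.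
- by rewrite /= xS yS zS.
- by rewrite /= /adj_in xS yS zS axy ayz adj_sym axz.
Qed.

Lemma acyclic_comp_rho_pairs_meet (X : {set T}) v :
  v \notin X -> ~ has_cycle_in G (comp_minus G X v) ->
  rho_pairs v \subset (fun p : T * T => [set p.1; p.2]) @: setX X (nbh G v).
Proof.
move=> vX acyc; apply/subsetP => S; rewrite inE.
case/existsP=> u1 /existsP [u2 /and5P [/eqP -> _ n1 n2 a12]].
have [x1 | x1] := boolP (u1 \in X).
  by apply/imsetP; exists (u1, u2); rewrite // inE x1 n2.
have [x2 | x2] := boolP (u2 \in X).
  by apply/imsetP; exists (u2, u1); [rewrite inE x2 | rewrite /= setUC].
case: acyc; apply: (triangle_has_cycle_in (mem_comp_minus_self X v)
  (mem_comp_minus_nbh vX x1 n1) (mem_comp_minus_nbh vX x2 n2)) => //.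
- by move: n1; rewrite inE.
- by move: n2; rewrite inE.
Qed.

Lemma rho_le_acyclic_comp (X : {set T}) v :
  v \notin X -> ~ has_cycle_in G (comp_minus G X v) ->
  rho G v <= #|X| * #|nbh G v|.
Proof.
move=> vX acyc; rewrite rhoE -cardsX.
exact: leq_trans (subset_leq_card (acyclic_comp_rho_pairs_meet vX acyc))
                 (leq_imset_card _ _).
Qed.

End TreeComponent.

Theorem mainTheorem4 (T : finType) (G : mgraph T) (k : nat) (v : T) :
  1 <= k ->
  7 * k < #|nbh G v| ->
  #|nbh G v| * (#|nbh G v| - 1) < 4 * rho G v ->
  forall X : {set T}, feasible G k X -> v \notin X ->
  induces_clique G (comp_minus G X v).
Proof.
move=> _ hdeg hrho X [hX hcomp] vX.
case: (hcomp v vX) => // [[_ acyc]].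
have hrhoX := rho_le_acyclic_comp vX acyc.
have hrhok : rho G v <= k * #|nbh G v|.
  by apply: leq_trans hrhoX _; rewrite leq_mul2r hX orbT.
set d := #|nbh G v| in hdeg hrho hrhok.
have : 4 * k * d <= d * (d - 1) by rewrite mulnC leq_mul2l; apply/orP; right; lia.
lia.
Qed.
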